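(* If $(d,p)\in\{(6,1),(10,2),(13,3),(14,3),(17,4)\}$, then $\varphi$ has a unique critical point in the interior of $K$ (namely $\mathbf{z}^*$).
   Context: Let $\tau_j=\binom{d}{p}\binom{p}{j}\binom{d-p}{p-j}$ for $0\le j\le p$. Points of $\mathbb{R}^{4p+1}$ are written $\mathbf{z}=(z,(z_{j00},z_{j01},z_{j10},z_{j11})_{j\in[p]})$, with $z_{0\alpha\alpha}=z-\sum_{j\in[p]}z_{j\alpha\alpha}$ ($\alpha\in\{0,1\}$) and $z_{0\alpha\beta}=\frac12-z-\sum_{j\in[p]}z_{j\alpha\beta}$ ($\alpha\ne\beta$). $K$ is the set of $\mathbf{z}$ with $0\le z\le\frac12$ and $z_{j\alpha\beta}\ge0$ for all $0\le j\le p$, $\alpha,\beta\in\{0,1\}$. $A(\mathbf{z})=p+(d-4p)z+\sum_{j\in[p]}j(z_{j00}+z_{j11}-z_{j01}-z_{j10})$, $B=\frac d2-A$, and $\varphi(\mathbf{z})=A\log A+B\log B+\sum_{0\le j\le p,\ \alpha,\beta\in\{0,1\}}(z_{j\alpha\beta}\log\tau_j-z_{j\alpha\beta}\log z_{j\alpha\beta})$. A critical point is a point of the interior of $K$ where the gradient of $\varphi$ vanishes. $\mathbf{z}^*$ has $z^*=\frac14$ and $z^*_{j\alpha\beta}=\tau_j/(4\binom{d}{p}^2)$. *)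

From Stdlib Require Import Reals Arith Bool.
From Coquelicot Require Import Coquelicot.
Open Scope R_scope.

(* A point z of R^{4p+1} is represented by the pair (z, w) where
   w j a b = z_{j a b} for j in [p] = {1..p} and a b in {0,1} (bool:
   false = 0, true = 1).  Values of w outside 1 <= j <= p are irrelevant. *)

Fixpoint sum1 (n : nat) (f : nat -> R) : R :=
  match n with
  | O => 0
  | S m => sum1 m f + f (S m)
  end.

Definition sum0 (n : nat) (f : nat -> R) : R := f O + sum1 n f.

Definition sum_ab (f : bool -> bool -> R) : R :=
  f false false + f false true + f true false + f true true.

Definition tau (d p j : nat) : R := Binomial.C d p * Binomial.C p j * Binomial.C (d - p) (p - j).

(* z_{j alpha beta} for 0 <= j <= p, with the j = 0 coordinates derived *)
Definition zc (p : nat) (z : R) (w : nat -> bool -> bool -> R)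
    (j : nat) (a b : bool) : R :=
  match j with
  | O => if Bool.eqb a b then z - sum1 p (fun i => w i a b)
         else / 2 - z - sum1 p (fun i => w i a b)
  | S _ => w j a b
  end.

Definition Afun (d p : nat) (z : R) (w : nat -> bool -> bool -> R) : R :=
  INR p + (INR d - 4 * INR p) * z
  + sum1 p (fun j => INR j * (w j false false + w j true true
                              - w j false true - w j true false)).

Definition Bfun (d p : nat) (z : R) (w : nat -> bool -> bool -> R) : R :=
  INR d / 2 - Afun d p z w.

Definition phi (d p : nat) (z : R) (w : nat -> bool -> bool -> R) : R :=
  Afun d p z w * ln (Afun d p z w) + Bfun d p z w * ln (Bfun d p z w)
  + sum0 p (fun j => sum_ab (fun a b =>
       zc p z w j a b * ln (tau d p j) - zc p z w j a b * ln (zc p z w j a b))).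

Definition inK (p : nat) (z : R) (w : nat -> bool -> bool -> R) : Prop :=
  0 <= z <= / 2 /\
  forall j a b, (j <= p)%nat -> 0 <= zc p z w j a b.

Definition inIntK (p : nat) (z : R) (w : nat -> bool -> bool -> R) : Prop :=
  exists eps, 0 < eps /\
    forall (z' : R) (w' : nat -> bool -> bool -> R),
      Rabs (z' - z) < eps ->
      (forall j a b, (1 <= j <= p)%nat -> Rabs (w' j a b - w j a b) < eps) ->
      inK p z' w'.

Definition upd (w : nat -> bool -> bool -> R) (j : nat) (a b : bool) (t : R)
  : nat -> bool -> bool -> R :=
  fun j' a' b' => if (Nat.eqb j' j && Bool.eqb a' a && Bool.eqb b' b)%bool
                  then t else w j' a' b'.

Definition critical (d p : nat) (z : R) (w : nat -> bool -> bool -> R) : Prop :=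
  inIntK p z w /\
  is_derive (fun t => phi d p t w) z 0 /\
  forall j a b, (1 <= j <= p)%nat ->
    is_derive (fun t => phi d p z (upd w j a b t)) (w j a b) 0.

Definition wstar (d p : nat) : nat -> bool -> bool -> R :=
  fun j _ _ => tau d p j / (4 * (Binomial.C d p) ^ 2).

From Stdlib Require Import Reals Arith Bool ZArith Lra Lia.
From Coquelicot Require Import Coquelicot.
Open Scope R_scope.

(* At an interior critical point every z_{jαβ} is positive, and the vanishing
   of the partial derivative in z_{jαβ} (j >= 1) gives
   z_{jαβ} = z_{0αβ} (τ_j/τ_0) x^{±j} with x = A/B, the sign being + on the
   diagonal α = β.  Summing over j shows that z_{0αβ} only depends on whether
   α = β, and the derivative in z then gives z_{000} = z_{001} y^{d-4p} with
   y = sqrt x.  Substituting all this into A = y^2 B leaves a single equation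
   in y, [balance d p y = 0].  For the five pairs (d, p) it factors as
   (1 - y) y^2 q(y) = 0 with q > 0 on (0, oo), so y = 1; then z = 1/4 and
   z_{jαβ} = τ_j / (4 C(d,p)^2) because Σ_j τ_j = C(d,p)^2 (Vandermonde).
   Conversely, all these equations hold at z*. *)

Lemma sum1_ext n f g :
  (forall k, (1 <= k <= n)%nat -> f k = g k) -> sum1 n f = sum1 n g.
Proof.
  induction n as [|n IH]; simpl; intros H; [reflexivity|].
  rewrite IH by (intros; apply H; lia). rewrite H by lia. reflexivity.
Qed.

Lemma sum1_le n f g :
  (forall k, (1 <= k <= n)%nat -> f k <= g k) -> sum1 n f <= sum1 n g.
Proof.
  induction n as [|n IH]; simpl; intros H; [lra|].
  assert (sum1 n f <= sum1 n g) by (apply IH; intros; apply H; lia).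
  assert (f (S n) <= g (S n)) by (apply H; lia).
  lra.
Qed.

Lemma sum1_plus n f g : sum1 n (fun k => f k + g k) = sum1 n f + sum1 n g.
Proof. induction n as [|n IH]; simpl; [ring|]. rewrite IH. ring. Qed.

Lemma sum1_scal n c f : sum1 n (fun k => c * f k) = c * sum1 n f.
Proof. induction n as [|n IH]; simpl; [ring|]. rewrite IH. ring. Qed.

Lemma sum1_const n c : sum1 n (fun _ => c) = INR n * c.
Proof. induction n as [|n IH]; simpl sum1; [simpl; ring|]. rewrite IH, S_INR. ring. Qed.

Lemma sum1_nonneg n f :
  (forall k, (1 <= k <= n)%nat -> 0 <= f k) -> 0 <= sum1 n f.
Proof.
  intros H. rewrite <- (Rmult_0_r (INR n)), <- sum1_const. apply sum1_le. exact H.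
Qed.

Lemma sum1_upd n f g j : (1 <= j <= n)%nat ->
  (forall k, (1 <= k <= n)%nat -> k <> j -> g k = f k) ->
  sum1 n g = sum1 n f + (g j - f j).
Proof.
  induction n as [|n IH]; intros Hj H; [lia|]. simpl.
  destruct (Nat.eq_dec j (S n)) as [->|Hne].
  - rewrite (sum1_ext n g f) by (intros; apply H; lia). ring.
  - rewrite IH by (try lia; intros; apply H; lia). rewrite (H (S n)) by lia. ring.
Qed.

Lemma sum0_scal_ext n c f g :
  (forall j, (j <= n)%nat -> f j = c * g j) -> sum0 n f = c * sum0 n g.
Proof.
  intros H. unfold sum0. rewrite H by lia.
  rewrite (sum1_ext n f (fun j => c * g j)) by (intros; apply H; lia).
  rewrite sum1_scal. ring.
Qed.

Lemma sum0_pos n f : (forall j, (j <= n)%nat -> 0 < f j) -> 0 < sum0 n f.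
Proof.
  intros H. unfold sum0.
  assert (0 <= sum1 n f) by (apply sum1_nonneg; intros; apply Rlt_le, H; lia).
  assert (0 < f O) by (apply H; lia).
  lra.
Qed.

Lemma finite_pos_lower_bound n (f : nat -> R) :
  (forall j, (j <= n)%nat -> 0 < f j) ->
  exists m, 0 < m /\ forall j, (j <= n)%nat -> m <= f j.
Proof.
  induction n as [|n IH]; intros H.
  - exists (f O). split; [apply H; lia|]. intros j Hj. replace j with O by lia. lra.
  - destruct IH as [m [Hm Hle]]; [intros; apply H; lia|].
    exists (Rmin m (f (S n))). split; [apply Rmin_pos; [exact Hm | apply H; lia]|].
    intros j Hj. destruct (Nat.eq_dec j (S n)) as [->|Hne]; [apply Rmin_r|].
    eapply Rle_trans; [apply Rmin_l | apply Hle; lia].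
Qed.

Lemma exp_INR_mult n u : exp (INR n * u) = exp u ^ n.
Proof.
  induction n as [|n IH]; [simpl; rewrite Rmult_0_l, exp_0; reflexivity|].
  rewrite S_INR, Rmult_plus_distr_r, Rmult_1_l, exp_plus, IH. simpl. ring.
Qed.

Lemma C_pos n k : 0 < Binomial.C n k.
Proof.
  unfold Binomial.C.
  apply Rdiv_lt_0_compat; [|apply Rmult_lt_0_compat]; apply lt_0_INR, lt_O_fact.
Qed.

Lemma tau_pos d p j : 0 < tau d p j.
Proof. unfold tau. apply Rmult_lt_0_compat; [apply Rmult_lt_0_compat|]; apply C_pos. Qed.

Definition sg (a b : bool) : R := if Bool.eqb a b then 1 else -1.

Lemma upd_same w j a b t a' b' :
  upd w j a b t j a' b' = if (Bool.eqb a' a && Bool.eqb b' b)%bool then t else w j a' b'.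
Proof. unfold upd. rewrite Nat.eqb_refl. reflexivity. Qed.

Lemma upd_other w j a b t k a' b' : k <> j -> upd w j a b t k a' b' = w k a' b'.
Proof. intros H. unfold upd. apply Nat.eqb_neq in H. rewrite H. reflexivity. Qed.

Lemma sum1_upd_coord p w j a b t a' b' : (1 <= j <= p)%nat ->
  sum1 p (fun i => upd w j a b t i a' b') = sum1 p (fun i => w i a' b') +
    (if (Bool.eqb a' a && Bool.eqb b' b)%bool then t - w j a b else 0).
Proof.
  intros Hj. rewrite (sum1_upd p (fun i => w i a' b')) with (j := j); auto.
  - rewrite upd_same.
    destruct (Bool.eqb a' a) eqn:E1, (Bool.eqb b' b) eqn:E2; simpl; try ring.
    apply Bool.eqb_prop in E1, E2. subst. ring.
  - intros k _ Hk. apply upd_other; auto.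
Qed.

Lemma zc0_eq p z w a b :
  zc p z w 0 a b = (if Bool.eqb a b then z else / 2 - z) - sum1 p (fun i => w i a b).
Proof. unfold zc. destruct (Bool.eqb a b); ring. Qed.

Lemma sum0_zc p z w a b :
  sum0 p (fun j => zc p z w j a b) = if Bool.eqb a b then z else / 2 - z.
Proof.
  unfold sum0. rewrite (sum1_ext p _ (fun j => w j a b)) by (intros [|k] Hk; [lia|reflexivity]).
  rewrite zc0_eq. ring.
Qed.

Lemma zc0_upd p z w j a b t a' b' : (1 <= j <= p)%nat ->
  zc p z (upd w j a b t) 0 a' b' = zc p z w 0 a' b' -
    (if (Bool.eqb a' a && Bool.eqb b' b)%bool then t - w j a b else 0).
Proof. intros Hj. rewrite !zc0_eq, sum1_upd_coord by exact Hj. ring. Qed.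

Lemma zc0_shift_z p z w t a b : zc p t w 0 a b = zc p z w 0 a b + sg a b * (t - z).
Proof. rewrite !zc0_eq. unfold sg. destruct (Bool.eqb a b); ring. Qed.

Lemma Afun_upd d p z w j a b t : (1 <= j <= p)%nat ->
  Afun d p z (upd w j a b t) = Afun d p z w + INR j * sg a b * (t - w j a b).
Proof.
  intros Hj. unfold Afun.
  rewrite (sum1_upd p (fun k => INR k * (w k false false + w k true true
    - w k false true - w k true false))) with (j := j); auto.
  - rewrite !upd_same. unfold sg. destruct a, b; simpl; ring.
  - intros k _ Hk. rewrite !upd_other; auto.
Qed.

Lemma Afun_shift_z d p z w t : Afun d p t w = Afun d p z w + (INR d - 4 * INR p) * (t - z).
Proof. unfold Afun. ring. Qed.

Lemma Afun_as_sum0 d p z w : Afun d p z w = sum0 p (fun j =>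
  (INR d / 2 - INR p + INR j) * (zc p z w j false false + zc p z w j true true)
  + (INR p - INR j) * (zc p z w j false true + zc p z w j true false)).
Proof.
  unfold sum0.
  rewrite (sum1_ext p _ (fun j => (INR d / 2 - INR p) * (w j false false + w j true true)
    + INR p * (w j false true + w j true false)
    + INR j * (w j false false + w j true true - w j false true - w j true false)))
    by (intros [|k] Hk; [lia|cbn [zc]; ring]).
  rewrite !zc0_eq. repeat rewrite sum1_plus || rewrite sum1_scal. cbn [Bool.eqb].
  unfold Afun. simpl INR. field.
Qed.

Lemma Bfun_as_sum0 d p z w : Bfun d p z w = sum0 p (fun j =>
  (INR p - INR j) * (zc p z w j false false + zc p z w j true true)
  + (INR d / 2 - INR p + INR j) * (zc p z w j false true + zc p z w j true false)).
Proof.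
  unfold sum0.
  rewrite (sum1_ext p _ (fun j => INR p * (w j false false + w j true true)
    + (INR d / 2 - INR p) * (w j false true + w j true false)
    + -1 * (INR j * (w j false false + w j true true - w j false true - w j true false))))
    by (intros [|k] Hk; [lia|cbn [zc]; ring]).
  rewrite !zc0_eq. repeat rewrite sum1_plus || rewrite sum1_scal. cbn [Bool.eqb].
  unfold Bfun, Afun. simpl INR. field.
Qed.

Lemma Afun_Bfun_pos d p z w : (2 * p < d)%nat ->
  (forall j a b, (j <= p)%nat -> 0 < zc p z w j a b) ->
  0 < Afun d p z w /\ 0 < Bfun d p z w.
Proof.
  intros Hd Hpos.
  assert (Hdp : INR p < INR d / 2).
  { apply lt_INR in Hd. rewrite mult_INR in Hd. simpl INR in Hd. lra. }
  rewrite Afun_as_sum0, Bfun_as_sum0.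
  split; apply sum0_pos; intros j Hj;
    assert (Hpj : INR j <= INR p) by (apply le_INR; exact Hj);
    pose proof (pos_INR j);
    pose proof (Hpos j false false Hj); pose proof (Hpos j true true Hj);
    pose proof (Hpos j false true Hj); pose proof (Hpos j true false Hj).
  - apply Rplus_lt_le_0_compat; [apply Rmult_lt_0_compat | apply Rmult_le_pos]; lra.
  - apply Rplus_le_lt_0_compat; [apply Rmult_le_pos | apply Rmult_lt_0_compat]; lra.
Qed.

(** * Partial derivatives of φ *)

Definition xlnx (y : R) : R := y * ln y.

Definition ent (c y : R) : R := y * ln c - y * ln y.

Definition entropy (d p : nat) (z : R) (w : nat -> bool -> bool -> R) : R :=
  sum0 p (fun k => sum_ab (fun a b => ent (tau d p k) (zc p z w k a b))).

Lemma phi_split d p z w :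
  phi d p z w = xlnx (Afun d p z w) + xlnx (Bfun d p z w) + entropy d p z w.
Proof. reflexivity. Qed.

Lemma entropy_upd d p z w j a b t : (1 <= j <= p)%nat ->
  entropy d p z (upd w j a b t) = entropy d p z w
    - ent (tau d p 0) (zc p z w 0 a b) + ent (tau d p 0) (zc p z w 0 a b - (t - w j a b))
    - ent (tau d p j) (w j a b) + ent (tau d p j) t.
Proof.
  intros Hj. unfold entropy, sum0.
  rewrite (sum1_upd p (fun k => sum_ab (fun a' b' => ent (tau d p k) (zc p z w k a' b'))))
    with (j := j); auto.
  - destruct j as [|j]; [lia|]. unfold sum_ab. rewrite !zc0_upd by lia.
    cbn [zc]. rewrite !upd_same.
    destruct a, b; simpl; rewrite ?Rminus_0_r; ring.
  - intros [|k] Hk Hne; [lia|]. cbn [zc]. unfold sum_ab. rewrite !upd_other; auto.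
Qed.

Lemma entropy_shift_z d p z w t : entropy d p t w = entropy d p z w
  + sum_ab (fun a b => ent (tau d p 0) (zc p z w 0 a b + sg a b * (t - z))
                       - ent (tau d p 0) (zc p z w 0 a b)).
Proof.
  unfold entropy, sum0.
  rewrite (sum1_ext p _ (fun k => sum_ab (fun a' b' => ent (tau d p k) (zc p z w k a' b'))))
    by (intros [|k] Hk; [lia|reflexivity]).
  unfold sum_ab. rewrite !(zc0_shift_z p z w t). ring.
Qed.

Lemma is_derive_phi_z d p z w :
  0 < Afun d p z w -> 0 < Bfun d p z w -> (forall a b, 0 < zc p z w 0 a b) ->
  is_derive (fun t => phi d p t w) z
   ((INR d - 4 * INR p) * (ln (Afun d p z w) - ln (Bfun d p z w))
    - ln (zc p z w 0 false false) + ln (zc p z w 0 false true)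
    + ln (zc p z w 0 true false) - ln (zc p z w 0 true true)).
Proof.
  intros HA HB Hz.
  apply is_derive_ext with (f := fun t =>
     xlnx (Afun d p z w + (INR d - 4 * INR p) * (t - z))
     + xlnx (INR d / 2 - (Afun d p z w + (INR d - 4 * INR p) * (t - z))) + entropy d p z w
     + sum_ab (fun a b => ent (tau d p 0) (zc p z w 0 a b + sg a b * (t - z))
                          - ent (tau d p 0) (zc p z w 0 a b))).
  { intro t. rewrite phi_split, (entropy_shift_z d p z w t). unfold Bfun.
    rewrite (Afun_shift_z d p z w t), Rplus_assoc. reflexivity. }
  unfold Bfun in *. unfold sum_ab, sg. cbn [Bool.eqb].
  generalize (Hz false false) (Hz false true) (Hz true false) (Hz true true).
  set (A := Afun d p z w) in *. set (a1 := zc p z w 0 false false).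
  set (a2 := zc p z w 0 false true). set (a3 := zc p z w 0 true false).
  set (a4 := zc p z w 0 true true). set (E := entropy d p z w).
  set (c := INR d - 4 * INR p). set (T := tau d p 0). set (h := INR d / 2) in *.
  clearbody A a1 a2 a3 a4 E c T h. clear Hz. intros.
  unfold xlnx, ent. auto_derive.
  - rewrite Rplus_opp_r, !Rmult_0_r, !Rplus_0_r. repeat split; lra.
  - rewrite Rplus_opp_r, !Rmult_0_r, !Rplus_0_r. change (h + - A) with (h - A).
    field. repeat split; apply Rgt_not_eq; lra.
Qed.

Lemma is_derive_phi_w d p z w j a b : (1 <= j <= p)%nat ->
  0 < Afun d p z w -> 0 < Bfun d p z w -> 0 < zc p z w 0 a b -> 0 < w j a b ->
  is_derive (fun t => phi d p z (upd w j a b t)) (w j a b)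
   (INR j * sg a b * (ln (Afun d p z w) - ln (Bfun d p z w))
    + ln (zc p z w 0 a b) - ln (tau d p 0) + ln (tau d p j) - ln (w j a b)).
Proof.
  intros Hj HA HB Hz Hw.
  apply is_derive_ext with (f := fun t =>
     xlnx (Afun d p z w + INR j * sg a b * (t - w j a b))
     + xlnx (INR d / 2 - (Afun d p z w + INR j * sg a b * (t - w j a b)))
     + (entropy d p z w - ent (tau d p 0) (zc p z w 0 a b)
        + ent (tau d p 0) (zc p z w 0 a b - (t - w j a b))
        - ent (tau d p j) (w j a b) + ent (tau d p j) t)).
  { intro t. rewrite phi_split, (entropy_upd d p z w j a b t Hj). unfold Bfun.
    rewrite (Afun_upd d p z w j a b t Hj). reflexivity. }
  unfold Bfun in *.
  set (A := Afun d p z w) in *. set (a1 := zc p z w 0 a b) in *.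
  set (t0 := w j a b) in *. set (E := entropy d p z w).
  set (c := INR j * sg a b). set (T := tau d p 0). set (Tj := tau d p j).
  set (h := INR d / 2) in *.
  clearbody A a1 t0 E c T Tj h.
  unfold xlnx, ent. auto_derive.
  - rewrite Rplus_opp_r, !Rmult_0_r, ?Ropp_0, !Rplus_0_r. repeat split; lra.
  - rewrite Rplus_opp_r, !Rmult_0_r, ?Ropp_0, !Rplus_0_r. change (h + - A) with (h - A).
    field. repeat split; apply Rgt_not_eq; lra.
Qed.

(** * Interior of K *)

(* Moving a single coordinate by eps/2 in the direction that decreases
   z_{jαβ} stays in K, so z_{jαβ} itself exceeds eps/2. *)
Lemma inIntK_zc_pos p z w :
  inIntK p z w -> forall j a b, (j <= p)%nat -> 0 < zc p z w j a b.
Proof.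
  intros [eps [Heps Hball]] [|j] a b Hj.
  - assert (Hin : inK p (z - sg a b * (eps / 2)) w).
    { apply Hball.
      - unfold sg. destruct (Bool.eqb a b); [rewrite Rabs_left1 | rewrite Rabs_right]; lra.
      - intros. rewrite Rminus_diag, Rabs_R0. lra. }
    destruct Hin as [_ Hin]. specialize (Hin O a b Hj).
    rewrite (zc0_shift_z p z w) in Hin. unfold sg in *. destruct (Bool.eqb a b); lra.
  - assert (Hin : inK p z (upd w (S j) a b (w (S j) a b - eps / 2))).
    { apply Hball; [rewrite Rminus_diag, Rabs_R0; lra|].
      intros j' a' b' _. unfold upd.
      destruct (Nat.eqb j' (S j) && Bool.eqb a' a && Bool.eqb b' b)%bool eqn:E.
      - apply andb_prop in E as [E E3]. apply andb_prop in E as [E1 E2].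
        apply Nat.eqb_eq in E1. apply Bool.eqb_prop in E2, E3. subst.
        rewrite Rabs_left1; lra.
      - rewrite Rminus_diag, Rabs_R0. lra. }
    destruct Hin as [_ Hin]. specialize (Hin (S j) a b Hj). cbn [zc] in Hin |- *.
    rewrite upd_same, !Bool.eqb_reflx in Hin. simpl in Hin. lra.
Qed.

(* If m bounds every z_{jαβ} from below, a perturbation of size m/(p+2) of the
   4p+1 free coordinates moves each z_{0αβ} by less than (p+1) m/(p+2). *)
Lemma zc_pos_inIntK p z w :
  (forall j a b, (j <= p)%nat -> 0 < zc p z w j a b) -> inIntK p z w.
Proof.
  intros Hpos.
  destruct (finite_pos_lower_bound p (fun j =>
    Rmin (Rmin (zc p z w j false false) (zc p z w j false true))
         (Rmin (zc p z w j true false) (zc p z w j true true)))) as [m [Hm Hmin]].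
  { intros j Hj. repeat apply Rmin_pos; apply Hpos; exact Hj. }
  assert (Hle : forall j a b, (j <= p)%nat -> m <= zc p z w j a b).
  { intros j a b Hj. specialize (Hmin j Hj). cbv beta in Hmin.
    destruct a, b; eauto using Rle_trans, Rmin_l, Rmin_r. }
  assert (Hw_nonneg : forall a b, 0 <= sum1 p (fun i => w i a b)).
  { intros a b. apply sum1_nonneg. intros [|k] Hk; [lia|].
    apply Rlt_le, (Hpos (S k) a b). lia. }
  assert (HP := pos_INR p).
  set (eps := m / (INR p + 2)).
  assert (Heps : eps * (INR p + 2) = m) by (unfold eps; field; lra).
  assert (Heps0 : 0 < eps) by (unfold eps; apply Rdiv_lt_0_compat; lra).
  exists eps. split; [exact Heps0|]. intros z' w' Hz' Hw'.
  apply Rabs_def2 in Hz'.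
  assert (Hsum : forall a b, sum1 p (fun i => w' i a b) <= sum1 p (fun i => w i a b) + INR p * eps).
  { intros a b. rewrite <- sum1_const, <- sum1_plus. apply sum1_le.
    intros k Hk. specialize (Hw' k a b Hk). apply Rabs_def2 in Hw'. lra. }
  assert (Hz0 := Hle O false false (Nat.le_0_l _)).
  assert (Hz1 := Hle O false true (Nat.le_0_l _)).
  rewrite zc0_eq in Hz0, Hz1. cbn [Bool.eqb] in Hz0, Hz1.
  pose proof (Hw_nonneg false false). pose proof (Hw_nonneg false true).
  split; [split; nra|].
  intros [|j] a b Hj.
  - specialize (Hle O a b Hj). specialize (Hsum a b). rewrite zc0_eq in Hle |- *.
    destruct (Bool.eqb a b); nra.
  - cbn [zc]. specialize (Hw' (S j) a b ltac:(lia)). apply Rabs_def2 in Hw'.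
    specialize (Hle (S j) a b Hj). cbn [zc] in Hle. nra.
Qed.

(** * Critical points *)

(* A - y^2 B divided by 2 z_{001}/tau_0, once the critical-point equations
   have expressed every z_{jαβ} through y = sqrt(A/B) (see [crit_balance]). *)
Definition balance (d p : nat) (y : R) : R :=
  sum0 p (fun j => tau d p j * ((INR d / 2 - INR p + INR j) * y ^ (d - 4 * p) * (y ^ 2) ^ j
                                + (INR p - INR j) * (/ y ^ 2) ^ j))
  - y ^ 2 * sum0 p (fun j => tau d p j * ((INR p - INR j) * y ^ (d - 4 * p) * (y ^ 2) ^ j
                                + (INR d / 2 - INR p + INR j) * (/ y ^ 2) ^ j)).

Section CriticalPoint.

Variables (d p : nat) (z : R) (w : nat -> bool -> bool -> R).
Hypothesis H4p : (4 * p <= d)%nat.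
Hypothesis Hd : (0 < d)%nat.
Hypothesis Hcrit : critical d p z w.

Let A := Afun d p z w.
Let B := Bfun d p z w.
Let L := ln A - ln B.
Let y := exp (L / 2).

Lemma crit_zc_pos j a b : (j <= p)%nat -> 0 < zc p z w j a b.
Proof. apply inIntK_zc_pos, Hcrit. Qed.

Lemma crit_A_pos : 0 < A.
Proof. apply Afun_Bfun_pos; [lia | exact crit_zc_pos]. Qed.

Lemma crit_B_pos : 0 < B.
Proof. apply Afun_Bfun_pos; [lia | exact crit_zc_pos]. Qed.

Lemma crit_y_sq : y ^ 2 = exp L.
Proof. unfold y. rewrite <- exp_INR_mult. f_equal. simpl. field. Qed.

Lemma crit_A_eq : A = y ^ 2 * B.
Proof.
  pose proof crit_A_pos. pose proof crit_B_pos.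
  rewrite crit_y_sq. unfold L. unfold Rminus.
  rewrite exp_plus, exp_Ropp, !exp_ln by assumption. field. lra.
Qed.

Lemma crit_eq_z :
  (INR d - 4 * INR p) * L = ln (zc p z w 0 false false) - ln (zc p z w 0 false true)
                            - ln (zc p z w 0 true false) + ln (zc p z w 0 true true).
Proof.
  destruct Hcrit as [_ [Hdz _]].
  pose proof (is_derive_phi_z d p z w crit_A_pos crit_B_pos
                (fun a b => crit_zc_pos O a b (Nat.le_0_l _))) as H.
  apply is_derive_unique in H. rewrite (is_derive_unique _ _ _ Hdz) in H.
  fold A B L in H. lra.
Qed.

Lemma crit_eq_w j a b : (1 <= j <= p)%nat ->
  ln (w j a b) = INR j * (sg a b * L) + ln (zc p z w 0 a b / tau d p 0 * tau d p j).
Proof.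
  intros Hj. destruct Hcrit as [_ [_ Hdw]].
  assert (Hw : 0 < w j a b).
  { destruct j as [|j]; [lia|]. exact (crit_zc_pos (S j) a b ltac:(lia)). }
  pose proof (crit_zc_pos O a b (Nat.le_0_l _)) as Hz0.
  pose proof (tau_pos d p 0) as Ht0. pose proof (tau_pos d p j) as Htj.
  pose proof (is_derive_phi_w d p z w j a b Hj crit_A_pos crit_B_pos Hz0 Hw) as H.
  apply is_derive_unique in H. rewrite (is_derive_unique _ _ _ (Hdw j a b Hj)) in H.
  rewrite ln_mult, ln_div by (try apply Rdiv_lt_0_compat; assumption).
  fold A B L in H. lra.
Qed.

Lemma crit_profile j a b : (j <= p)%nat ->
  zc p z w j a b = zc p z w 0 a b / tau d p 0 * tau d p j
                   * (if Bool.eqb a b then y ^ 2 else / y ^ 2) ^ j.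
Proof.
  intros Hj. pose proof (tau_pos d p 0) as Ht0.
  destruct j as [|j]; [simpl; field; lra|].
  pose proof (crit_zc_pos (S j) a b Hj) as Hw.
  pose proof (crit_zc_pos O a b (Nat.le_0_l _)) as Hz0.
  pose proof (tau_pos d p (S j)) as Htj.
  change (zc p z w (S j) a b) with (w (S j) a b) in Hw |- *.
  rewrite <- (exp_ln (w (S j) a b)) by exact Hw.
  rewrite crit_eq_w by lia.
  rewrite exp_plus, exp_INR_mult, exp_ln
    by (apply Rmult_lt_0_compat; [apply Rdiv_lt_0_compat|]; assumption).
  rewrite crit_y_sq. unfold sg. destruct (Bool.eqb a b).
  - replace (1 * L) with L by ring. ring.
  - replace (-1 * L) with (- L) by ring. rewrite exp_Ropp. ring.
Qed.

Lemma crit_sums a b :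
  (if Bool.eqb a b then z else / 2 - z) =
  zc p z w 0 a b / tau d p 0
  * sum0 p (fun j => tau d p j * (if Bool.eqb a b then y ^ 2 else / y ^ 2) ^ j).
Proof.
  rewrite <- (sum0_zc p z w a b). apply sum0_scal_ext. intros j Hj. rewrite crit_profile by exact Hj. ring.
Qed.

Lemma crit_zc0_sym :
  zc p z w 0 true true = zc p z w 0 false false /\
  zc p z w 0 true false = zc p z w 0 false true.
Proof.
  assert (Hy : 0 < y) by apply exp_pos.
  pose proof (tau_pos d p 0) as Ht0.
  assert (HS : forall x, 0 < x -> 0 < sum0 p (fun j => tau d p j * x ^ j) / tau d p 0).
  { intros x Hx. apply Rdiv_lt_0_compat; [|exact Ht0].
    apply sum0_pos. intros. apply Rmult_lt_0_compat; [apply tau_pos | apply pow_lt, Hx]. }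
  pose proof (crit_sums true true) as Htt. pose proof (crit_sums false false) as Hff.
  pose proof (crit_sums true false) as Htf. pose proof (crit_sums false true) as Hft.
  cbn [Bool.eqb] in Htt, Hff, Htf, Hft.
  pose proof (HS (y ^ 2) ltac:(apply pow_lt, Hy)) as HSp.
  pose proof (HS (/ y ^ 2) ltac:(apply Rinv_0_lt_compat, pow_lt, Hy)) as HSm.
  split.
  - apply Rmult_eq_reg_r with (sum0 p (fun j => tau d p j * (y ^ 2) ^ j) / tau d p 0); [|lra].
    unfold Rdiv in *. lra.
  - apply Rmult_eq_reg_r with (sum0 p (fun j => tau d p j * (/ y ^ 2) ^ j) / tau d p 0); [|lra].
    unfold Rdiv in *. lra.
Qed.

Lemma crit_zc0_diag : zc p z w 0 false false = zc p z w 0 false true * y ^ (d - 4 * p).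
Proof.
  pose proof (crit_zc_pos O false false (Nat.le_0_l _)).
  pose proof (crit_zc_pos O false true (Nat.le_0_l _)).
  destruct crit_zc0_sym as [Htt Htf].
  pose proof crit_eq_z as Hz. rewrite Htt, Htf in Hz.
  rewrite <- (exp_ln (zc p z w 0 false false)), <- (exp_ln (zc p z w 0 false true))
    by assumption.
  unfold y. rewrite <- exp_INR_mult, <- exp_plus. f_equal.
  rewrite minus_INR, mult_INR by exact H4p. simpl INR. lra.
Qed.

Lemma crit_balance : balance d p y = 0.
Proof.
  pose proof (tau_pos d p 0) as Ht0.
  pose proof (crit_zc_pos O false true (Nat.le_0_l _)) as Hc.
  destruct crit_zc0_sym as [Htt Htf].
  set (c := zc p z w 0 false true / tau d p 0).
  assert (Hc0 : 0 < 2 * c) by (unfold c; apply Rmult_lt_0_compat, Rdiv_lt_0_compat; lra).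
  assert (Hterm : forall j a b, (j <= p)%nat ->
    zc p z w j a b = c * tau d p j * (if Bool.eqb a b then y ^ (d - 4 * p) * (y ^ 2) ^ j
                                      else (/ y ^ 2) ^ j)).
  { intros j a b Hj. rewrite crit_profile by exact Hj. unfold c.
    destruct a, b; cbn [Bool.eqb];
      rewrite ?Htt, ?Htf, ?crit_zc0_diag; field; lra. }
  assert (HA : A = 2 * c * sum0 p (fun j => tau d p j *
    ((INR d / 2 - INR p + INR j) * y ^ (d - 4 * p) * (y ^ 2) ^ j
     + (INR p - INR j) * (/ y ^ 2) ^ j))).
  { unfold A. rewrite Afun_as_sum0. apply sum0_scal_ext. intros j Hj.
    rewrite !(Hterm j) by exact Hj. cbn [Bool.eqb]. ring. }
  assert (HB : B = 2 * c * sum0 p (fun j => tau d p j *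
    ((INR p - INR j) * y ^ (d - 4 * p) * (y ^ 2) ^ j
     + (INR d / 2 - INR p + INR j) * (/ y ^ 2) ^ j))).
  { unfold B. rewrite Bfun_as_sum0. apply sum0_scal_ext. intros j Hj.
    rewrite !(Hterm j) by exact Hj. cbn [Bool.eqb]. ring. }
  pose proof crit_A_eq as HAB. rewrite HA, HB in HAB.
  apply Rmult_eq_reg_l with (2 * c); [|lra].
  unfold balance. rewrite Rmult_0_r, Rmult_minus_distr_l, HAB. ring.
Qed.

Lemma crit_at_y1 : y = 1 -> sum0 p (tau d p) = Binomial.C d p ^ 2 ->
  z = / 4 /\ (forall j a b, (1 <= j <= p)%nat -> w j a b = wstar d p j a b).
Proof.
  intros Hy1 HC.
  pose proof (tau_pos d p 0) as Ht0.
  assert (Hpow : forall a b, (if Bool.eqb a b then y ^ 2 else / y ^ 2) = 1).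
  { intros a b. rewrite Hy1, pow1, Rinv_1. destruct (Bool.eqb a b); reflexivity. }
  assert (Hc : forall a b, zc p z w 0 a b = zc p z w 0 false true).
  { destruct crit_zc0_sym as [Htt Htf]. pose proof crit_zc0_diag as Hdg.
    rewrite Hy1, pow1, Rmult_1_r in Hdg. intros [|] [|]; congruence. }
  assert (Hsum : forall a b, (if Bool.eqb a b then z else / 2 - z) =
                             zc p z w 0 false true / tau d p 0 * Binomial.C d p ^ 2).
  { intros a b. rewrite crit_sums, Hpow, Hc, <- HC. f_equal.
    rewrite (sum0_scal_ext p 1 _ (tau d p)) by (intros; rewrite pow1; ring). ring. }
  pose proof (Hsum true true) as Hz. pose proof (Hsum false true) as Hz'.
  cbn [Bool.eqb] in Hz, Hz'.
  assert (Hz4 : z = / 4) by lra.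
  split; [exact Hz4|].
  intros [|j] a b Hj; [lia|].
  pose proof (C_pos d p) as HCp. assert (HC0 : 0 < Binomial.C d p ^ 2) by (apply pow_lt, HCp).
  assert (Hq : zc p z w 0 false true / tau d p 0 = / (4 * Binomial.C d p ^ 2)).
  { apply Rmult_eq_reg_r with (4 * Binomial.C d p ^ 2); [|lra]. rewrite Rinv_l by lra.
    rewrite Rmult_comm, Rmult_assoc, (Rmult_comm (Binomial.C d p ^ 2)), <- Hz, Hz4. field. }
  change (w (S j) a b) with (zc p z w (S j) a b).
  rewrite crit_profile, Hpow, pow1, Hc, Hq by lia. unfold wstar. field. lra.
Qed.

End CriticalPoint.

Lemma wstar_critical d p : (0 < d)%nat -> sum0 p (tau d p) = Binomial.C d p ^ 2 ->
  critical d p (/ 4) (wstar d p).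
Proof.
  intros Hd HC.
  set (K := 4 * Binomial.C d p ^ 2).
  pose proof (C_pos d p) as HCp.
  assert (HK : 0 < K) by (unfold K; pose proof (pow_lt _ 2 HCp); lra).
  assert (Hzc : forall j a b, (j <= p)%nat -> zc p (/ 4) (wstar d p) j a b = tau d p j / K).
  { intros [|j] a b Hj; [|reflexivity].
    assert (Hs : sum1 p (fun i => wstar d p i a b) = (Binomial.C d p ^ 2 - tau d p 0) / K).
    { rewrite (sum1_ext p _ (fun i => / K * tau d p i)) by (intros; unfold wstar, K, Rdiv; ring).
      rewrite sum1_scal. unfold sum0 in HC. rewrite <- HC. field. lra. }
    rewrite zc0_eq, Hs. unfold K in *. destruct (Bool.eqb a b); field; lra. }
  assert (HA : Afun d p (/ 4) (wstar d p) = INR d / 4).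
  { unfold Afun. rewrite (sum1_ext p _ (fun _ => 0)) by (intros; unfold wstar; ring).
    rewrite sum1_const. field. }
  assert (HB : Bfun d p (/ 4) (wstar d p) = INR d / 4) by (unfold Bfun; rewrite HA; field).
  assert (Hdpos : 0 < INR d / 4) by (apply lt_0_INR in Hd; lra).
  assert (Hpos : forall j a b, (j <= p)%nat -> 0 < zc p (/ 4) (wstar d p) j a b)
    by (intros; rewrite Hzc by assumption; apply Rdiv_lt_0_compat; [apply tau_pos | lra]).
  split; [|split].
  - exact (zc_pos_inIntK p _ _ Hpos).
  - pose proof (is_derive_phi_z d p (/ 4) (wstar d p)) as H.
    rewrite HA, HB, !Hzc in H by lia.
    match type of H with _ -> _ -> _ -> is_derive _ _ ?v => replace 0 with v by ring end.
    apply H; [lra | lra | intros; apply Hpos; lia].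
  - intros j a b Hj.
    pose proof (is_derive_phi_w d p (/ 4) (wstar d p) j a b Hj) as H.
    assert (Hw : wstar d p j a b = tau d p j / K) by reflexivity.
    rewrite Hw in H |- *. rewrite HA, HB, !Hzc in H by lia.
    rewrite (ln_div (tau d p 0) K), (ln_div (tau d p j) K) in H by (apply tau_pos || exact HK).
    match type of H with _ -> _ -> _ -> _ -> is_derive _ _ ?v => replace 0 with v by ring end.
    apply H; try lra; (apply Rdiv_lt_0_compat; [apply tau_pos | exact HK]).
Qed.

Theorem unique_critical_point d p : (0 < d)%nat -> (4 * p <= d)%nat ->
  sum0 p (tau d p) = Binomial.C d p ^ 2 ->
  (forall y, 0 < y -> balance d p y = 0 -> y = 1) ->
  critical d p (/ 4) (wstar d p) /\
  (forall (z : R) (w : nat -> bool -> bool -> R), critical d p z w ->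
     z = / 4 /\ (forall j a b, (1 <= j <= p)%nat -> w j a b = wstar d p j a b)).
Proof.
  intros Hd H4p HC Hroot. split; [exact (wstar_critical d p Hd HC)|].
  intros z w Hcrit. apply crit_at_y1; try assumption.
  apply Hroot; [apply exp_pos | apply crit_balance; assumption].
Qed.

(** * The five cases *)

Fixpoint binomZ (n k : nat) : Z :=
  match n, k with
  | _, O => 1%Z
  | O, S _ => 0%Z
  | S n', S k' => (binomZ n' k' + binomZ n' k)%Z
  end.

Lemma binomZ_large n k : (n < k)%nat -> binomZ n k = 0%Z.
Proof.
  revert k. induction n as [|n IH]; intros [|k] Hk; try lia; [reflexivity|].
  simpl. rewrite !IH by lia. reflexivity.
Qed.

Lemma C_IZR n k : (k <= n)%nat -> Binomial.C n k = IZR (binomZ n k).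
Proof.
  revert k. induction n as [|n IH]; intros [|k] Hk; try (rewrite C_n_0; reflexivity); [lia|].
  simpl binomZ. rewrite plus_IZR, <- (IH k) by lia.
  destruct (Nat.eq_dec k n) as [->|Hne].
  - rewrite binomZ_large, !C_n_n by lia. simpl. ring.
  - rewrite <- (IH (S k)) by lia. apply eq_sym, pascal. lia.
Qed.

Ltac eval_constants :=
  rewrite ?C_IZR by lia; rewrite ?INR_IZR_INZ;
  repeat match goal with
  | |- context [IZR ?n] => progress (let v := eval vm_compute in n in change n with v)
  end.

Ltac expand_balance := unfold balance, sum0, tau; cbn [sum1 Nat.sub Nat.mul Nat.add]; eval_constants.

Ltac pow_pos_upto y n :=
  match n with
  | O => idtac
  | S ?m => pose proof (pow_lt y n ltac:(lra)); pow_pos_upto y m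
  end.

Lemma balance_root_of_cofactor d p k (q : R -> R) :
  (forall y, 0 < y -> balance d p y * y ^ k = (1 - y) * y ^ 2 * q y) ->
  (forall y, 0 < y -> 0 < q y) ->
  forall y, 0 < y -> balance d p y = 0 -> y = 1.
Proof.
  intros Hfac Hq y Hy Hb.
  specialize (Hfac y Hy). rewrite Hb, Rmult_0_l, Rmult_assoc in Hfac.
  assert (Hpos : 0 < y ^ 2 * q y)
    by (apply Rmult_lt_0_compat; [apply pow_lt | apply Hq]; exact Hy).
  apply eq_sym, Rmult_integral in Hfac as [Hy1 | Hq0]; lra.
Qed.

Lemma balance_root_6_1 y : 0 < y -> balance 6 1 y = 0 -> y = 1.
Proof.
  apply (balance_root_of_cofactor 6 1 2 (fun y => 12 * (1 + y) * (1 + y ^ 2)));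
    clear y; intros y Hy.
  - expand_balance. field. lra.
  - pow_pos_upto y 2%nat. apply Rmult_lt_0_compat; lra.
Qed.

Lemma balance_root_10_2 y : 0 < y -> balance 10 2 y = 0 -> y = 1.
Proof.
  apply (balance_root_of_cofactor 10 2 4
    (fun y => (1 + y) * (495 + 135 * y ^ 2 + 135 * y ^ 4 + 495 * y ^ 6)));
    clear y; intros y Hy.
  - expand_balance. field. lra.
  - pow_pos_upto y 6%nat. apply Rmult_lt_0_compat; lra.
Qed.

Lemma balance_root_13_3 y : 0 < y -> balance 13 3 y = 0 -> y = 1.
Proof.
  apply (balance_root_of_cofactor 13 3 6 (fun y =>
    6721 + 6721 * y + 36751 * y ^ 2 + 36751 * y ^ 3 - 34034 * y ^ 4 + 86086 * y ^ 5
    - 34034 * y ^ 6 + 36751 * y ^ 7 + 36751 * y ^ 8 + 6721 * y ^ 9 + 6721 * y ^ 10));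
    clear y; intros y Hy.
  - expand_balance. field. lra.
  - pow_pos_upto y 10%nat.
    (* 17017 y^3 (1-y)^2 (1+y^2) absorbs both negative coefficients. *)
    assert (0 <= y ^ 3 * (1 - y) ^ 2 * (1 + y ^ 2))
      by (apply Rmult_le_pos; [apply Rmult_le_pos; [lra | apply pow2_ge_0] | lra]).
    lra.
Qed.

Lemma balance_root_14_3 y : 0 < y -> balance 14 3 y = 0 -> y = 1.
Proof.
  apply (balance_root_of_cofactor 14 3 6 (fun y => (1 + y) * (1 + y ^ 2)
    * (9464 * (y ^ 4 - 1) ^ 2 + 48048 * y ^ 2 * (1 - y ^ 2) ^ 2 + 4368 * y ^ 4)));
    clear y; intros y Hy.
  - expand_balance. field. lra.
  - pow_pos_upto y 4%nat.
    assert (0 <= (y ^ 4 - 1) ^ 2) by apply pow2_ge_0.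
    assert (0 <= y ^ 2 * (1 - y ^ 2) ^ 2) by (apply Rmult_le_pos; [lra | apply pow2_ge_0]).
    apply Rmult_lt_0_compat; [apply Rmult_lt_0_compat|]; lra.
Qed.

Lemma balance_root_17_4 y : 0 < y -> balance 17 4 y = 0 -> y = 1.
Proof.
  apply (balance_root_of_cofactor 17 4 8 (fun y =>
    103530 + 103530 * y + 1403010 * y ^ 2 + 1403010 * y ^ 3 + 2331210 * y ^ 4
    + 2331210 * y ^ 5 - 5836950 * y ^ 6 + 1820700 * y ^ 7 - 5836950 * y ^ 8
    + 2331210 * y ^ 9 + 2331210 * y ^ 10 + 1403010 * y ^ 11 + 1403010 * y ^ 12
    + 103530 * y ^ 13 + 103530 * y ^ 14));
    clear y; intros y Hy.
  - expand_balance. field. lra.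
  - pow_pos_upto y 14%nat.
    assert (Hsq : forall k m, 0 <= y ^ k * (1 - y ^ m) ^ 2)
      by (intros; apply Rmult_le_pos; [apply pow_le; lra | apply pow2_ge_0]).
    pose proof (Hsq 6%nat 1%nat). pose proof (Hsq 4%nat 3%nat). pose proof (Hsq 3%nat 4%nat).
    pose proof (Hsq 2%nat 5%nat). pose proof (Hsq 1%nat 6%nat). pose proof (Hsq 0%nat 7%nat).
    assert (0 <= y ^ 5 * ((1 - y) ^ 2) ^ 2)
      by (apply Rmult_le_pos; [apply pow_le; lra | apply pow2_ge_0]).
    lra.
Qed.

Theorem lemmaA2 (d p : nat) :
  ((d = 6 /\ p = 1) \/ (d = 10 /\ p = 2) \/ (d = 13 /\ p = 3) \/
   (d = 14 /\ p = 3) \/ (d = 17 /\ p = 4))%nat ->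
  critical d p (/ 4) (wstar d p) /\
  (forall (z : R) (w : nat -> bool -> bool -> R),
     critical d p z w ->
     z = / 4 /\ (forall j a b, (1 <= j <= p)%nat -> w j a b = wstar d p j a b)).
Proof.
  intros Hcases.
  destruct Hcases as [[-> ->]|[[-> ->]|[[-> ->]|[[-> ->]|[-> ->]]]]];
    apply unique_critical_point; try lia;
    try (unfold sum0, tau; cbn [sum1 Nat.sub]; eval_constants; ring).
  - exact balance_root_6_1.
  - exact balance_root_10_2.
  - exact balance_root_13_3.
  - exact balance_root_14_3.
  - exact balance_root_17_4.
Qed.
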